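(* Consider the model below with $\epsilon_2\ge0$, fix all parameters other than $\epsilon_1$, let $\delta:=(M-1)(1-M_f\beta)+\lambda\sigma N$, and let $\bar{\epsilon}_{BR,RPE}\in[-\infty,\infty)$ be the number such that a BR-RPE exists if and only if $\epsilon_1\ge\bar{\epsilon}_{BR,RPE}$. If $\epsilon_1>\bar{\epsilon}_{BR,RPE}$, then: (i) there is exactly one E-stable BR-RPE; (ii) if $\delta\ge0$, the E-stable BR-RPE is of type PP or of type ZP; (iii) if $\delta<0$, the E-stable BR-RPE is the unique BR-RPE.
   Context: Parameters: $0<\beta<1$, $\sigma,\lambda,\mu>0$, $\psi>1$, $M,M_f,N\in(0,1]$ with $\min\{M,M_f,N\}<1$, $p,q\in(0,1]$ with $(p,q)\neq(1,1)$. The shock $\epsilon_t$ is a two-state Markov chain on $\{\epsilon_1,\epsilon_2\}$ with $\Pr(\epsilon_{t+1}=\epsilon_1\mid\epsilon_t=\epsilon_1)=p$, $\Pr(\epsilon_{t+1}=\epsilon_2\mid\epsilon_t=\epsilon_2)=q$; $\bar q:=(1-p)/(2-p-q)$. Model: $x_t=M\hat E_t x_{t+1}-\sigma(i_t-N\hat E_t\pi_{t+1})+\epsilon_t$, $\pi_t=\lambda x_t+M_f\beta\hat E_t\pi_{t+1}$, $i_t=\max\{\psi\pi_t,-\mu\}$. A BR-RPE is a pair $Y_j=(x_j,\pi_j)$, $j=1,2$, such that with $(\bar x,\bar\pi):=\bar qY_2+(1-\bar q)Y_1$ and $i_j=\max\{\psi\pi_j,-\mu\}$: $x_j=M\bar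 x-\sigma(i_j-N\bar\pi)+\epsilon_j$ and $\pi_j=\lambda x_j+M_f\beta\bar\pi$, $j=1,2$. Types: the ZLB binds in state $j$ if $\psi\pi_j\le-\mu$; type PP (no state), ZP (state 1 only), PZ (state 2 only), ZZ (both). Let $\hat A_P=\frac{1}{1+\lambda\sigma\psi}\begin{pmatrix}M&N\sigma-M_f\beta\sigma\psi\\ M\lambda&M_f\beta+N\lambda\sigma\end{pmatrix}$, $\hat A_Z=\begin{pmatrix}M&N\sigma\\ M\lambda&M_f\beta+N\lambda\sigma\end{pmatrix}$, $I$ the $2\times2$ identity, $DT^{PP}=\hat A_P-I$, $DT^{ZP}=\bar q\hat A_P+(1-\bar q)\hat A_Z-I$, $DT^{PZ}=(1-\bar q)\hat A_P+\bar q\hat A_Z-I$, $DT^{ZZ}=\hat A_Z-I$. A BR-RPE of type $i$ is E-stable if all eigenvalues of $DT^i$ have negative real parts. *)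

From HB Require Import structures.
From mathcomp Require Import all_boot all_order all_algebra.
From mathcomp Require Import complex.
From mathcomp Require Import constructive_ereal.
Set Implicit Arguments. Unset Strict Implicit. Unset Printing Implicit Defensive.
Import Order.TTheory GRing.Theory Num.Theory.
Local Open Scope ring_scope.

Section Model.
Variable R : rcfType.

Record params := Params {
  beta : R; sigma : R; lambda : R; mu : R; psi : R;
  M : R; Mf : R; N : R; p : R; q : R }.

Definition params_ok (P : params) : Prop :=
  (0 < beta P < 1) /\ 0 < sigma P /\ 0 < lambda P /\ 0 < mu P /\ 1 < psi P /\
  (0 < M P <= 1) /\ (0 < Mf P <= 1) /\ (0 < N P <= 1) /\
  Num.min (M P) (Num.min (Mf P) (N P)) < 1 /\
  (0 < p P <= 1) /\ (0 < q P <= 1) /\ (p P, q P) <> (1, 1).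

Definition qbar (P : params) : R := (1 - p P) / (2 - p P - q P).

Definition irate (P : params) (pi : R) : R := Num.max (psi P * pi) (- mu P).

(* Y = (x, pi).  A BR-RPE is a pair (Y1, Y2) solving the stated equations. *)
Definition BR_RPE (P : params) (eps1 eps2 : R) (Y1 Y2 : R * R) : Prop :=
  let qb := qbar P in
  let xbar := qb * Y2.1 + (1 - qb) * Y1.1 in
  let pibar := qb * Y2.2 + (1 - qb) * Y1.2 in
  [/\ Y1.1 = M P * xbar - sigma P * (irate P Y1.2 - N P * pibar) + eps1,
      Y1.2 = lambda P * Y1.1 + Mf P * beta P * pibar,
      Y2.1 = M P * xbar - sigma P * (irate P Y2.2 - N P * pibar) + eps2 &
      Y2.2 = lambda P * Y2.1 + Mf P * beta P * pibar].

Definition zlb_binds (P : params) (pi : R) : bool := psi P * pi <= - mu P.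

Inductive rpe_type := PP | ZP | PZ | ZZ.

Definition type_of (P : params) (Y1 Y2 : R * R) : rpe_type :=
  match zlb_binds P Y1.2, zlb_binds P Y2.2 with
  | false, false => PP
  | true, false => ZP
  | false, true => PZ
  | true, true => ZZ
  end.

Definition mx2 (a b c d : R) : 'M[R]_2 :=
  \matrix_(i < 2, j < 2)
    if i == 0 :> nat then (if j == 0 :> nat then a else b)
    else (if j == 0 :> nat then c else d).

Definition A_P (P : params) : 'M[R]_2 :=
  (1 + lambda P * sigma P * psi P)^-1 *:
  mx2 (M P) (N P * sigma P - Mf P * beta P * sigma P * psi P)
      (M P * lambda P) (Mf P * beta P + N P * lambda P * sigma P).

Definition A_Z (P : params) : 'M[R]_2 :=
  mx2 (M P) (N P * sigma P)
      (M P * lambda P) (Mf P * beta P + N P * lambda P * sigma P).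

Definition DT (P : params) (t : rpe_type) : 'M[R]_2 :=
  let qb := qbar P in
  match t with
  | PP => A_P P - 1%:M
  | ZP => qb *: A_P P + (1 - qb) *: A_Z P - 1%:M
  | PZ => (1 - qb) *: A_P P + qb *: A_Z P - 1%:M
  | ZZ => A_Z P - 1%:M
  end.

Definition all_eig_neg_re (A : 'M[R]_2) : Prop :=
  forall z : R[i], root (char_poly (map_mx (real_complex R) A)) z ->
    complex.Re z < 0.

Definition Estable_BR_RPE (P : params) (eps1 eps2 : R) (Y1 Y2 : R * R) : Prop :=
  BR_RPE P eps1 eps2 Y1 Y2 /\ all_eig_neg_re (DT P (type_of P Y1 Y2)).

Definition delta (P : params) : R :=
  (M P - 1) * (1 - Mf P * beta P) + lambda P * sigma P * N P.

End Model.

From HB Require Import structures.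
From mathcomp Require Import all_boot all_order all_algebra.
From mathcomp Require Import complex.
From mathcomp Require Import constructive_ereal.
From mathcomp Require Import ring lra.
Set Implicit Arguments. Unset Strict Implicit. Unset Printing Implicit Defensive.
Import Order.TTheory GRing.Theory Num.Theory.
Local Open Scope ring_scope.

(* A BR-RPE is determined by its mean inflation Pi = qbar pi_2 + (1 - qbar) pi_1:
   zeta_j := pi_j + lambda sigma i_j equals (1 + delta) Pi + lambda eps_j, and pi_j is
   recovered from zeta_j by inverting pi |-> pi + lambda sigma max(psi pi, -mu), a
   piecewise linear map with one branch per ZLB regime.  Hence equilibria are the zeros
   of gap Pi := qbar pi_2 + (1 - qbar) pi_1 - Pi, which is the minimum of four affine
   functions, one per regime.  The slope of the active branch is -det DT, and
   tr DT < 0 as soon as det DT > 0, so an equilibrium is E-stable exactly when the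
   branch of its regime is decreasing.  Since gap lies below every branch, a zero on a
   decreasing branch is the largest zero: this gives uniqueness, and when delta < 0
   every slope (all are <= delta) is negative, so every equilibrium is E-stable.  For
   existence, gap is positive at the mean inflation of an equilibrium with a smaller
   shock eps_1 (or at an explicit point when qbar = 1), and the first root of the
   decreasing branches to the right of such a point is a zero on a decreasing branch.
   Finally ZZ has slope delta, and a sign argument excludes PZ when eps_2 >= 0. *)

Section MinOfAffine.
Variables (R : realFieldType) (I : finType) (a s : I -> R) (f : R -> R).
Hypothesis f_le_branch : forall i x, f x <= a i + s i * x.

Lemma root_le_branch_root i x y :
  a i + s i * x = 0 -> s i < 0 -> f y = 0 -> y <= x.
Proof.
move=> ai_x si_lt0 fy0; rewrite leNgt; apply/negP => xy.
have := f_le_branch i y; rewrite fy0; nra.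
Qed.

Hypothesis f_attained : forall x, exists i, f x = a i + s i * x.

Lemma exists_root_of_decreasing_branches x0 i0 : 0 < f x0 -> s i0 < 0 ->
  exists x, f x = 0 /\ forall i, a i + s i * x = 0 -> s i < 0.
Proof.
move=> fx0 si0; pose r i := - a i / s i.
(* At the least root r j of the decreasing branches, each decreasing branch is still
   nonnegative and each nondecreasing one is positive, being positive at x0 < r j. *)
have r_root i : s i < 0 -> a i + s i * r i = 0.
  by move=> si; rewrite /r mulrC divfK ?subrr // lt_eqF.
have r_gt i : s i < 0 -> x0 < r i.
  move=> si; have := f_le_branch i x0; have := r_root i si; nra.
case: (arg_minP r (i0 := i0) (P := fun i => s i < 0) si0) => j sj j_min.
have branch_ge0 i : 0 <= a i + s i * r j /\ (0 <= s i -> 0 < a i + s i * r j).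
  case: (ltP (s i) 0) => si.
    split=> [|si_ge0]; last lra.
    by have := j_min i si; have := r_root i si; nra.
  have := f_le_branch i x0; have := r_gt j sj; split=> [|_]; nra.
have fr0 : f (r j) = 0.
  apply/eqP; rewrite eq_le; apply/andP; split.
    by have := f_le_branch j (r j); rewrite r_root.
  by have [i ->] := f_attained (r j); exact: (branch_ge0 i).1.
exists (r j); split=> // i ai0; rewrite ltNge; apply/negP => /(branch_ge0 i).2.
by rewrite ai0 ltxx.
Qed.

End MinOfAffine.

Lemma mxtrace_mx2 (T : nzRingType) (A : 'M[T]_2) : \tr A = A 0 0 + A 1 1.
Proof.
by rewrite /mxtrace 2!big_ord_recl big_ord0 addr0 (_ : lift 0 0 = 1) //; apply: val_inj.
Qed.

Lemma det_mx2 (T : comNzRingType) (A : 'M[T]_2) :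
  \det A = A 0 0 * A 1 1 - A 0 1 * A 1 0.
Proof.
have l01 : lift ord0 ord0 = 1 :> 'I_2 by apply: val_inj.
have l10 : lift 1 ord0 = 0 :> 'I_2 by apply: val_inj.
rewrite (expand_det_row _ 0) 2!big_ord_recl big_ord0 addr0 /cofactor !det_mx11.
by rewrite !mxE /= l01 l10 addn0 expr0 expr1 mul1r mulN1r mulrN.
Qed.

Lemma char_poly_mx2 (T : comNzRingType) (A : 'M[T]_2) :
  char_poly A = 'X^2 - (\tr A)%:P * 'X + (\det A)%:P.
Proof.
rewrite /char_poly [LHS]det_mx2 [\det A]det_mx2 mxtrace_mx2 !mxE !eqxx.
rewrite (_ : (0 == 1 :> 'I_2) = false) // (_ : (1 == 0 :> 'I_2) = false) //.
by rewrite mulr1n mulr0n; ring.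
Qed.

Section Hurwitz2.
Variable R : rcfType.
Implicit Type A : 'M[R]_2.
Local Open Scope complex_scope.

Lemma root_char_poly_mx2 A (z : R[i]) :
  root (char_poly (map_mx (real_complex R) A)) z =
  (z ^+ 2 - (\tr A)%:C * z + (\det A)%:C == 0).
Proof.
rewrite char_poly_mx2 /root !hornerE !mxtrace_mx2 !det_mx2 !mxE.
by rewrite rmorphD rmorphB !rmorphM.
Qed.

Lemma eig_neg_re_mx2 A : \tr A < 0 -> 0 < \det A -> all_eig_neg_re A.
Proof.
move=> tr_lt0 det_gt0 [a b]; rewrite root_char_poly_mx2 => /eqP /= [re_eq im_eq].
rewrite ltNge; apply/negP => a_ge0.
have b0 : b = 0.
  have : b * (2 * a - \tr A) = 0 by rewrite -im_eq; ring.
  have ne0 : 2 * a - \tr A != 0 by rewrite gt_eqF //; lra.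
  by move/eqP; rewrite mulf_eq0 (negbTE ne0) orbF => /eqP.
move: re_eq; rewrite b0; nra.
Qed.

Lemma det_gt0_of_eig_neg_re A : all_eig_neg_re A -> 0 < \det A.
Proof.
move=> stable; rewrite ltNge; apply/negP => det_le0.
set t := \tr A; set d := \det A in det_le0.
have disc_ge0 : 0 <= t ^+ 2 - 4 * d by nra.
set s := Num.sqrt (t ^+ 2 - 4 * d).
have s_sq : s * s = t ^+ 2 - 4 * d by rewrite -expr2 sqr_sqrtr.
have s_ge0 : 0 <= s by apply: sqrtr_ge0.
have root_ge0 : 0 <= (t + s) / 2 by nra.
have := stable ((t + s) / 2)%:C; rewrite root_char_poly_mx2 -/t -/d.
rewrite -rmorphXn -rmorphM -rmorphB -rmorphD (_ : _ - _ + _ = 0).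
  by rewrite rmorph0 eqxx => /(_ isT) /=; lra.
nra.
Qed.

End Hurwitz2.

Section Model.
Variables (R : rcfType) (P : params R).
Hypothesis P_ok : params_ok P.

Lemma beta_gt0 : 0 < beta P. Proof. by case: P_ok => /andP[]. Qed.
Lemma beta_lt1 : beta P < 1. Proof. by case: P_ok => /andP[]. Qed.
Lemma sigma_gt0 : 0 < sigma P. Proof. by case: P_ok => _ []. Qed.
Lemma lambda_gt0 : 0 < lambda P. Proof. by case: P_ok => _ [_ []]. Qed.
Lemma mu_gt0 : 0 < mu P. Proof. by case: P_ok => _ [_ [_ []]]. Qed.
Lemma psi_gt1 : 1 < psi P. Proof. by case: P_ok => _ [_ [_ [_ []]]]. Qed.
Lemma psi_gt0 : 0 < psi P. Proof. exact: lt_trans ltr01 psi_gt1. Qed.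
Lemma M_gt0 : 0 < M P. Proof. by case: P_ok => _ [_ [_ [_ [_ [/andP[]]]]]]. Qed.
Lemma M_le1 : M P <= 1. Proof. by case: P_ok => _ [_ [_ [_ [_ [/andP[]]]]]]. Qed.
Lemma Mf_gt0 : 0 < Mf P. Proof. by case: P_ok => _ [_ [_ [_ [_ [_ [/andP[]]]]]]]. Qed.
Lemma Mf_le1 : Mf P <= 1. Proof. by case: P_ok => _ [_ [_ [_ [_ [_ [/andP[]]]]]]]. Qed.
Lemma N_gt0 : 0 < N P. Proof. by case: P_ok => _ [_ [_ [_ [_ [_ [_ [/andP[]]]]]]]]. Qed.
Lemma N_le1 : N P <= 1. Proof. by case: P_ok => _ [_ [_ [_ [_ [_ [_ [/andP[]]]]]]]]. Qed.

Lemma qbar_denom_gt0 : 0 < 2 - p P - q P.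
Proof.
case: P_ok => _ [_ [_ [_ [_ [_ [_ [_ [_ [/andP[_ p_le1] [/andP[_ q_le1] pq]]]]]]]]]].
rewrite ltNge; apply/negP => le0; apply: pq.
by congr pair; apply/eqP; rewrite eq_le ?p_le1 ?q_le1 /=; lra.
Qed.

Lemma qbar_ge0 : 0 <= qbar P.
Proof.
have := qbar_denom_gt0.
case: P_ok => _ [_ [_ [_ [_ [_ [_ [_ [_ [/andP[_ p_le1] _]]]]]]]]] d_gt0.
by rewrite divr_ge0 //; lra.
Qed.

Lemma qbar_le1 : qbar P <= 1.
Proof.
have := qbar_denom_gt0.
case: P_ok => _ [_ [_ [_ [_ [_ [_ [_ [_ [_ [/andP[_ q_le1] _]]]]]]]]]] d_gt0.
by rewrite ler_pdivrMr // mul1r; lra.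
Qed.

Definition policy_gain := 1 + lambda P * sigma P * psi P.

Lemma policy_gain_gt1 : 1 < policy_gain.
Proof.
have := lambda_gt0; have := sigma_gt0; have := psi_gt1; rewrite /policy_gain.
by move=> *; rewrite ltrDl !mulr_gt0 //; lra.
Qed.

Lemma policy_gain_gt0 : 0 < policy_gain.
Proof. exact: lt_trans ltr01 policy_gain_gt1. Qed.

Lemma policy_gain_neq0 : policy_gain != 0.
Proof. by rewrite gt_eqF ?policy_gain_gt0. Qed.

Lemma lambda_sigma_mu_gt0 : 0 < lambda P * sigma P * mu P.
Proof. by rewrite !mulr_gt0 ?lambda_gt0 ?sigma_gt0 ?mu_gt0. Qed.

Lemma Mf_beta_gt0 : 0 < Mf P * beta P.
Proof. by rewrite mulr_gt0 ?Mf_gt0 ?beta_gt0. Qed.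

Lemma Mf_beta_lt1 : Mf P * beta P < 1.
Proof. have := Mf_le1; have := beta_gt0; have := beta_lt1; nra. Qed.

Lemma delta_gt_neg1 : 0 < 1 + delta P.
Proof.
have := Mf_beta_gt0; have := Mf_beta_lt1; have := M_gt0.
have : 0 < lambda P * sigma P * N P.
  by rewrite !mulr_gt0 ?lambda_gt0 ?sigma_gt0 ?N_gt0.
rewrite /delta => *; nra.
Qed.

Lemma delta_lt_policy_gain : 1 + delta P < policy_gain.
Proof.
have : (M P - 1) * (1 - Mf P * beta P) <= 0.
  by rewrite mulr_le0_ge0 ?subr_le0 ?subr_ge0 ?M_le1 // ltW ?Mf_beta_lt1.
have : lambda P * sigma P * N P < lambda P * sigma P * psi P.
  by rewrite ltr_pM2l ?mulr_gt0 ?lambda_gt0 ?sigma_gt0 //; apply: le_lt_trans N_le1 psi_gt1.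
rewrite /delta /policy_gain; lra.
Qed.

(* zeta e_j Pi is pi_j + lambda sigma i_j at an equilibrium with mean inflation Pi:
   substitute the Phillips curve into the IS curve and use
   lambda xbar = (1 - Mf beta) Pi. *)
Definition zeta (e Pi : R) := (1 + delta P) * Pi + lambda P * e.

Definition binds_at (z : R) := zlb_binds P (z + lambda P * sigma P * mu P).

Definition pi_branch (b : bool) (z : R) :=
  if b then z + lambda P * sigma P * mu P else z / policy_gain.

Definition pi_of (z : R) := pi_branch (binds_at z) z.

Lemma zlb_binds_pi_branch b z : zlb_binds P (pi_branch b z) = binds_at z.
Proof.
case: b => //; rewrite /binds_at /zlb_binds /= mulrA ler_pdivrMr ?policy_gain_gt0 //.
have := lambda_gt0; have := sigma_gt0; have := mu_gt0; have := psi_gt1.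
by rewrite /policy_gain => *; apply/idP/idP; nra.
Qed.

Lemma pi_of_le_branch b z : pi_of z <= pi_branch b z.
Proof.
have c_gt0 := policy_gain_gt0.
have ls_gt0 : 0 < lambda P * sigma P by rewrite mulr_gt0 ?lambda_gt0 ?sigma_gt0.
rewrite /pi_of /pi_branch /binds_at /zlb_binds /policy_gain in c_gt0 *.
case: b; case: ifP => binds //.
  rewrite ler_pdivrMr //; move/negbT: binds; rewrite -ltNge -subr_gt0.
  by move/(mulr_gt0 ls_gt0)/ltW; nra.
rewrite ler_pdivlMr //.
have : 0 <= lambda P * sigma P * (- mu P - psi P * (z + lambda P * sigma P * mu P)).
  by rewrite mulr_ge0 ?subr_ge0 // ltW.
have := mu_gt0; nra.
Qed.

Lemma pi_branch_lt b : {homo pi_branch b : z z' / z < z'}.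
Proof.
move=> z z' lt_zz'; rewrite /pi_branch; case: b; first by rewrite ltrD2r.
by rewrite ltr_pM2r // invr_gt0 policy_gain_gt0.
Qed.

Lemma pi_of_lt : {homo pi_of : z z' / z < z'}.
Proof.
move=> z z' lt_zz'.
exact: le_lt_trans (pi_of_le_branch _ z) (pi_branch_lt (binds_at z') lt_zz').
Qed.

Lemma irate_le : {homo irate P : x y / x <= y}.
Proof.
move=> x y le_xy; rewrite /irate ge_max !le_max lexx orbT andbT.
by rewrite ler_pM2l ?le_xy ?psi_gt0.
Qed.

Lemma pi_ofP pi z :
  pi + lambda P * sigma P * irate P pi = z <-> pi = pi_of z.
Proof.
have ls_gt0 : 0 < lambda P * sigma P by rewrite mulr_gt0 ?lambda_gt0 ?sigma_gt0.
have lt_response x y :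
    x < y -> x + lambda P * sigma P * irate P x < y + lambda P * sigma P * irate P y.
  by move=> lt_xy; apply: ltr_leD => //; rewrite ler_pM2l // irate_le // ltW.
have response_pi_of : pi_of z + lambda P * sigma P * irate P (pi_of z) = z.
  rewrite /irate maxEle -[_ <= _]/(zlb_binds P (pi_of z)) zlb_binds_pi_branch.
  move: policy_gain_neq0; rewrite /pi_of /pi_branch /policy_gain.
  by case: (binds_at z) => c_neq0; [ring | field].
split=> [response_pi | ->] //.
by case: (ltgtP pi (pi_of z)) => // /lt_response; rewrite response_pi response_pi_of ltxx.
Qed.

Definition rpe_of (e Pi : R) : R * R :=
  ((pi_of (zeta e Pi) - Mf P * beta P * Pi) / lambda P, pi_of (zeta e Pi)).

Lemma state_eqP e X Pi (Y : R * R) :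
  lambda P * X = (1 - Mf P * beta P) * Pi ->
  (Y.1 = M P * X - sigma P * (irate P Y.2 - N P * Pi) + e /\
   Y.2 = lambda P * Y.1 + Mf P * beta P * Pi) <-> Y = rpe_of e Pi.
Proof.
have l_neq0 : lambda P != 0 by rewrite gt_eqF ?lambda_gt0.
case: Y => x pi /= X_eq.
have {X_eq} -> : X = (1 - Mf P * beta P) * Pi / lambda P by rewrite -X_eq; field.
have policy_eq : pi = lambda P * x + Mf P * beta P * Pi ->
    x = M P * ((1 - Mf P * beta P) * Pi / lambda P) -
        sigma P * (irate P pi - N P * Pi) + e <->
    pi + lambda P * sigma P * irate P pi = zeta e Pi.
  move=> ->; set i := irate P _; rewrite /zeta /delta.
  split=> [-> | policy]; first by field.
  apply: (mulfI l_neq0); rewrite (_ : lambda P * x = lambda P * x + Mf P * beta P * Pi +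
    lambda P * sigma P * i - Mf P * beta P * Pi - lambda P * sigma P * i); last by ring.
  by rewrite policy; field.
rewrite /rpe_of; split.
  case=> x_eq pi_eq; have /pi_ofP pi_def := (policy_eq pi_eq).1 x_eq.
  by rewrite -pi_def pi_eq; congr pair; field.
case=> x_def pi_def.
have pi_eq : pi = lambda P * x + Mf P * beta P * Pi by rewrite x_def pi_def; field.
by split=> //; apply/(policy_eq pi_eq)/pi_ofP.
Qed.

Definition gap_branch e1 e2 b1 b2 Pi :=
  qbar P * pi_branch b2 (zeta e2 Pi) + (1 - qbar P) * pi_branch b1 (zeta e1 Pi) - Pi.

Definition gap e1 e2 Pi :=
  qbar P * pi_of (zeta e2 Pi) + (1 - qbar P) * pi_of (zeta e1 Pi) - Pi.

Lemma gap_active e1 e2 Pi :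
  gap e1 e2 Pi = gap_branch e1 e2 (binds_at (zeta e1 Pi)) (binds_at (zeta e2 Pi)) Pi.
Proof. by []. Qed.

Lemma gap_le_branch e1 e2 b1 b2 Pi : gap e1 e2 Pi <= gap_branch e1 e2 b1 b2 Pi.
Proof.
rewrite lerD2r; apply: lerD; apply: ler_wpM2l; rewrite ?pi_of_le_branch ?qbar_ge0 //.
by rewrite subr_ge0 qbar_le1.
Qed.

Lemma BR_RPEP e1 e2 Y1 Y2 : BR_RPE P e1 e2 Y1 Y2 <->
  exists Pi, [/\ gap e1 e2 Pi = 0, Y1 = rpe_of e1 Pi & Y2 = rpe_of e2 Pi].
Proof.
rewrite /BR_RPE; split.
  set Pi := _ * Y2.2 + _; set X := _ * Y2.1 + _; case=> eq1 eq2 eq3 eq4.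
  have X_eq : lambda P * X = (1 - Mf P * beta P) * Pi.
    apply/eqP; rewrite -subr_eq0; apply/eqP.
    have -> : lambda P * X - (1 - Mf P * beta P) * Pi =
      qbar P * (lambda P * Y2.1 + Mf P * beta P * Pi - Y2.2) +
      (1 - qbar P) * (lambda P * Y1.1 + Mf P * beta P * Pi - Y1.2) by rewrite /X /Pi; ring.
    by rewrite -eq2 -eq4 !subrr !mulr0 addr0.
  have Y1_def := (state_eqP e1 Y1 X_eq).1 (conj eq1 eq2).
  have Y2_def := (state_eqP e2 Y2 X_eq).1 (conj eq3 eq4).
  exists Pi; split=> //.
  have pi1 : Y1.2 = pi_of (zeta e1 Pi) by rewrite Y1_def.
  have pi2 : Y2.2 = pi_of (zeta e2 Pi) by rewrite Y2_def.
  by rewrite /gap -pi1 -pi2 subrr.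
case=> Pi [gap0 -> ->] /=.
have pibar : qbar P * pi_of (zeta e2 Pi) + (1 - qbar P) * pi_of (zeta e1 Pi) = Pi.
  by apply/eqP; rewrite -subr_eq0 -[_ - _]/(gap e1 e2 Pi) gap0.
have X_eq : lambda P * (qbar P * ((pi_of (zeta e2 Pi) - Mf P * beta P * Pi) / lambda P) +
    (1 - qbar P) * ((pi_of (zeta e1 Pi) - Mf P * beta P * Pi) / lambda P)) =
    (1 - Mf P * beta P) * Pi.
  transitivity (qbar P * pi_of (zeta e2 Pi) + (1 - qbar P) * pi_of (zeta e1 Pi) -
                Mf P * beta P * Pi); first by field; rewrite gt_eqF ?lambda_gt0.
  by rewrite pibar; ring.
rewrite pibar.
have [eq1 eq2] := (state_eqP e1 (rpe_of e1 Pi) X_eq).2 erefl.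
have [eq3 eq4] := (state_eqP e2 (rpe_of e2 Pi) X_eq).2 erefl.
by split.
Qed.

Definition branch_slope (b : bool) := if b then 1 else policy_gain^-1.

Definition mean_slope b1 b2 := qbar P * branch_slope b2 + (1 - qbar P) * branch_slope b1.

Definition gap_slope b1 b2 := (1 + delta P) * mean_slope b1 b2 - 1.

Definition active_slope e1 e2 Pi :=
  gap_slope (binds_at (zeta e1 Pi)) (binds_at (zeta e2 Pi)).

Lemma gap_branchE e1 e2 b1 b2 Pi :
  gap_branch e1 e2 b1 b2 Pi = gap_branch e1 e2 b1 b2 0 + gap_slope b1 b2 * Pi.
Proof.
have := policy_gain_neq0; rewrite /gap_branch /gap_slope /mean_slope /branch_slope /zeta.
by case: b1; case: b2; rewrite /pi_branch => c_neq0; field.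
Qed.

Lemma gap_le_affine e1 e2 (i : bool * bool) Pi :
  gap e1 e2 Pi <= gap_branch e1 e2 i.1 i.2 0 + gap_slope i.1 i.2 * Pi.
Proof. by rewrite -gap_branchE gap_le_branch. Qed.

Lemma branch_slope_gt0 b : 0 < branch_slope b.
Proof. by case: b; rewrite //= invr_gt0 policy_gain_gt0. Qed.

Lemma branch_slope_le1 b : branch_slope b <= 1.
Proof. by case: b; rewrite //= invf_le1 ?ltW ?policy_gain_gt1 // policy_gain_gt0. Qed.

Lemma mean_slope_gt0 b1 b2 : 0 < mean_slope b1 b2.
Proof.
have := branch_slope_gt0 b1; have := branch_slope_gt0 b2.
have := qbar_ge0; have := qbar_le1; rewrite /mean_slope; nra.
Qed.

Lemma mean_slope_le1 b1 b2 : mean_slope b1 b2 <= 1.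
Proof.
have := branch_slope_le1 b1; have := branch_slope_le1 b2.
have := qbar_ge0; have := qbar_le1; rewrite /mean_slope; nra.
Qed.

Definition type_of_binds (b1 b2 : bool) : rpe_type :=
  match b1, b2 with
  | false, false => PP
  | true, false => ZP
  | false, true => PZ
  | true, true => ZZ
  end.

Lemma type_of_rpe_of e1 e2 Pi :
  type_of P (rpe_of e1 Pi) (rpe_of e2 Pi) =
  type_of_binds (binds_at (zeta e1 Pi)) (binds_at (zeta e2 Pi)).
Proof. by rewrite /type_of /= /pi_of !zlb_binds_pi_branch. Qed.

Lemma mxtrace_DT b1 b2 : \tr (DT P (type_of_binds b1 b2)) =
  mean_slope b1 b2 * (M P + Mf P * beta P + N P * lambda P * sigma P) - 2.
Proof.
have := policy_gain_neq0; rewrite mxtrace_mx2 /mean_slope /branch_slope /policy_gain.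
by case: b1; case: b2; rewrite /DT /A_P /A_Z /mx2 !mxE /= => c_neq0; field.
Qed.

Lemma det_DT b1 b2 : \det (DT P (type_of_binds b1 b2)) = - gap_slope b1 b2.
Proof.
have := policy_gain_neq0.
rewrite det_mx2 /gap_slope /mean_slope /branch_slope /policy_gain /delta.
by case: b1; case: b2; rewrite /DT /A_P /A_Z /mx2 !mxE /= => c_neq0; field.
Qed.

Lemma stable_DTP b1 b2 :
  all_eig_neg_re (DT P (type_of_binds b1 b2)) <-> gap_slope b1 b2 < 0.
Proof.
split=> [/det_gt0_of_eig_neg_re | slope_lt0]; first by rewrite det_DT oppr_gt0.
apply: eig_neg_re_mx2; last by rewrite det_DT oppr_gt0.
(* M + Mf beta + N lambda sigma = (1 + delta) + M Mf beta, and w (1 + delta) < 1 with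
   w = mean_slope b1 b2 <= 1, while M Mf beta < 1. *)
have := mean_slope_gt0 b1 b2; have := mean_slope_le1 b1 b2.
have : M P * (Mf P * beta P) < 1.
  by have := M_gt0; have := M_le1; have := Mf_beta_gt0; have := Mf_beta_lt1; nra.
have := M_gt0; have := Mf_beta_gt0; move: slope_lt0.
rewrite mxtrace_DT /gap_slope /delta; nra.
Qed.

Lemma Estable_BR_RPEP e1 e2 Y1 Y2 : Estable_BR_RPE P e1 e2 Y1 Y2 <->
  exists Pi, [/\ gap e1 e2 Pi = 0, active_slope e1 e2 Pi < 0,
                 Y1 = rpe_of e1 Pi & Y2 = rpe_of e2 Pi].
Proof.
split=> [[/BR_RPEP [Pi [gap0 Y1_def Y2_def]]] | [Pi [gap0 slope_lt0 Y1_def Y2_def]]].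
  rewrite Y1_def Y2_def type_of_rpe_of => /stable_DTP slope_lt0.
  by exists Pi.
split; first by apply/BR_RPEP; exists Pi.
by rewrite Y1_def Y2_def type_of_rpe_of; apply/stable_DTP.
Qed.

Lemma gap_slope_PP : gap_slope false false < 0.
Proof.
have -> : gap_slope false false = (1 + delta P) / policy_gain - 1.
  by rewrite /gap_slope /mean_slope /=; ring.
by rewrite subr_lt0 ltr_pdivrMr ?mul1r ?delta_lt_policy_gain ?policy_gain_gt0.
Qed.

Lemma gap_slope_ZZ : gap_slope true true = delta P.
Proof. by rewrite /gap_slope /mean_slope /=; ring. Qed.

Lemma gap_slope_le_delta b1 b2 : gap_slope b1 b2 <= delta P.
Proof.
have := mean_slope_le1 b1 b2; have := delta_gt_neg1; rewrite /gap_slope; nra.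
Qed.

Lemma gap_root_le e1 e2 Pa Pb : gap e1 e2 Pa = 0 -> active_slope e1 e2 Pa < 0 ->
  gap e1 e2 Pb = 0 -> Pb <= Pa.
Proof.
move=> gap_a0; apply: (root_le_branch_root (gap_le_affine e1 e2)
  (i := (binds_at (zeta e1 Pa), binds_at (zeta e2 Pa)))).
by rewrite -gap_branchE -gap_active.
Qed.

Lemma exists_stable_gap_root e1 e2 P0 : 0 < gap e1 e2 P0 ->
  exists Pi, gap e1 e2 Pi = 0 /\ active_slope e1 e2 Pi < 0.
Proof.
move=> gap_pos.
have gap_attained Pi : exists i : bool * bool,
    gap e1 e2 Pi = gap_branch e1 e2 i.1 i.2 0 + gap_slope i.1 i.2 * Pi.
  by exists (binds_at (zeta e1 Pi), binds_at (zeta e2 Pi)); rewrite -gap_branchE.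
have [Pi [gap0 stable]] := exists_root_of_decreasing_branches (gap_le_affine e1 e2)
  gap_attained (i0 := (false, false)) gap_pos gap_slope_PP.
by exists Pi; split=> //; apply: (stable (_, _)); rewrite -gap_branchE.
Qed.

(* In regime PZ, zeta_2 < zeta_1 forces eps_1 > eps_2 >= 0, so the PZ branch has a
   nonnegative intercept and its zero lies at Pi >= 0; but then zeta_2 >= 0, and the
   ZLB cannot bind in state 2. *)
Lemma stable_gap_root_binds e1 e2 Pi : 0 <= e2 -> gap e1 e2 Pi = 0 ->
  active_slope e1 e2 Pi < 0 -> binds_at (zeta e2 Pi) -> binds_at (zeta e1 Pi).
Proof.
move=> e2_ge0 gap0 slope_lt0 binds2; apply/negPn/negP => /negbTE binds1.
move: gap0 slope_lt0; rewrite gap_active /active_slope binds1 binds2 gap_branchE.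
set a0 := gap_branch _ _ _ _ 0; move=> gap0 slope_lt0.
have l_gt0 := lambda_gt0; have lsm_gt0 := lambda_sigma_mu_gt0.
move: binds1 binds2; rewrite /binds_at /zlb_binds /zeta => /negbT; rewrite -ltNge.
move=> binds1 binds2.
have le2_ge0 := mulr_ge0 (ltW l_gt0) e2_ge0.
have le1_gt0 : 0 < lambda P * e1.
  suff : lambda P * e2 < lambda P * e1 by lra.
  by move: (le_lt_trans binds2 binds1); rewrite ltr_pM2l ?psi_gt0 //; lra.
have a0_ge0 : 0 <= a0.
  rewrite /a0 /gap_branch /pi_branch /zeta mulr0 !add0r subr0.
  rewrite addr_ge0 // mulr_ge0 ?qbar_ge0 ?subr_ge0 ?qbar_le1 //; last first.
    by rewrite ltW // divr_gt0 ?policy_gain_gt0.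
  by rewrite addr_ge0 // ltW.
have Pi_ge0 : 0 <= Pi.
  rewrite leNgt; apply/negP => Pi_lt0; move: gap0.
  by have := Pi_lt0; rewrite -(nmulr_rgt0 _ slope_lt0); lra.
have : 0 < (1 + delta P) * Pi + lambda P * e2 + lambda P * sigma P * mu P.
  by have := mulr_ge0 (ltW delta_gt_neg1) Pi_ge0; lra.
by move/(mulr_gt0 psi_gt0); have := mu_gt0; lra.
Qed.

(* If qbar = 1 only state 2 matters, and at this Pi < 0 both branches of pi_of are
   above Pi, because (1 + delta) Pi = - lambda sigma mu / 2 and 1 + delta < policy_gain. *)
Lemma gap_pos_of_qbar1 e1 e2 : qbar P = 1 -> 0 <= e2 ->
  0 < gap e1 e2 (- (lambda P * sigma P * mu P) / (2 * (1 + delta P))).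
Proof.
move=> q1 e2_ge0; rewrite /gap q1 subrr mul0r addr0 mul1r subr_gt0.
have k_gt0 := delta_gt_neg1; have k_lt_c := delta_lt_policy_gain.
have c_gt0 := policy_gain_gt0.
have lsm_gt0 := lambda_sigma_mu_gt0.
have le2_ge0 := mulr_ge0 (ltW lambda_gt0) e2_ge0.
set Pi := _ / _.
have Pi_lt0 : Pi < 0 by rewrite /Pi mulNr oppr_lt0 divr_gt0 // mulr_gt0.
have kPi : (1 + delta P) * Pi = - (lambda P * sigma P * mu P) / 2.
  by rewrite /Pi; field; rewrite gt_eqF.
rewrite /pi_of /pi_branch /zeta kPi; case: binds_at; first lra.
rewrite ltr_pdivlMr //.
have : policy_gain * Pi < (1 + delta P) * Pi by rewrite ltr_nM2r.
lra.
Qed.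

Lemma gap_pos_of_smaller_shock e e1 e2 Pi : e < e1 -> qbar P < 1 ->
  gap e e2 Pi = 0 -> 0 < gap e1 e2 Pi.
Proof.
move=> lt_ee1 q_lt1; rewrite /gap => gap0.
have : pi_of (zeta e Pi) < pi_of (zeta e1 Pi).
  by apply: pi_of_lt; rewrite /zeta ltrD2l ltr_pM2l ?lambda_gt0.
have := qbar_ge0; nra.
Qed.

Lemma exists_gap_pos e1 e2 : 0 <= e2 ->
  (exists2 e, e < e1 & exists Y1 Y2, BR_RPE P e e2 Y1 Y2) ->
  exists P0, 0 < gap e1 e2 P0.
Proof.
move=> e2_ge0 [e lt_ee1 [Y1 [Y2 /BR_RPEP [Pe [gap0 _ _]]]]].
case: (ltP (qbar P) 1) => [q_lt1 | q_ge1].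
  by exists Pe; apply: gap_pos_of_smaller_shock gap0.
by eexists; apply: gap_pos_of_qbar1 => //; apply/eqP; rewrite eq_le qbar_le1.
Qed.

End Model.

Unset Implicit Arguments.

Theorem proposition13 (R : rcfType) (P : params R) (eps2 : R)
    (epsbar : \bar R) (eps1 : R) :
  params_ok P -> 0 <= eps2 ->
  epsbar != +oo%E ->
  (forall e : R,
     (exists Y1 Y2, BR_RPE P e eps2 Y1 Y2) <-> (epsbar <= e%:E)%E) ->
  (epsbar < eps1%:E)%E ->
  [/\ (exists Y1 Y2, Estable_BR_RPE P eps1 eps2 Y1 Y2 /\
        forall Z1 Z2, Estable_BR_RPE P eps1 eps2 Z1 Z2 -> Z1 = Y1 /\ Z2 = Y2),
      (0 <= delta P ->
        forall Y1 Y2, Estable_BR_RPE P eps1 eps2 Y1 Y2 ->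
          type_of P Y1 Y2 = PP \/ type_of P Y1 Y2 = ZP) &
      (delta P < 0 ->
        forall Y1 Y2, Estable_BR_RPE P eps1 eps2 Y1 Y2 ->
          forall Z1 Z2, BR_RPE P eps1 eps2 Z1 Z2 -> Z1 = Y1 /\ Z2 = Y2)].
Proof.
move=> P_ok eps2_ge0 _ existsP lt_eps1.
have [e epsbar_le lt_e] : exists2 e, (epsbar <= e%:E)%E & e < eps1.
  clear existsP; case: epsbar lt_eps1 => [r | | ] //=.
    by rewrite lte_fin => r_lt; exists r.
  by exists (eps1 - 1); rewrite ?leNye //; lra.
have [P0 gap_pos] : exists P0, 0 < gap P eps1 eps2 P0.
  by apply: (exists_gap_pos P_ok eps2_ge0); exists e => //; apply/existsP.
have [Ps [gap0 slope_lt0]] := exists_stable_gap_root P_ok gap_pos.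
have root_eq Pi : gap P eps1 eps2 Pi = 0 -> active_slope P eps1 eps2 Pi < 0 -> Pi = Ps.
  move=> gapi slopei; apply/eqP; rewrite eq_le.
  by rewrite (gap_root_le P_ok gap0 slope_lt0 gapi) (gap_root_le P_ok gapi slopei gap0).
split.
- exists (rpe_of P eps1 Ps), (rpe_of P eps2 Ps).
  split=> [|Z1 Z2 /(Estable_BR_RPEP P_ok) [Pz [gapz slopez -> ->]]].
    by apply/(Estable_BR_RPEP P_ok); exists Ps.
  by rewrite (root_eq Pz gapz slopez).
- move=> delta_ge0 Y1 Y2 /(Estable_BR_RPEP P_ok) [Pi [gapi slopei -> ->]].
  have binds12 := stable_gap_root_binds P_ok eps2_ge0 gapi slopei.
  move: slopei; rewrite (type_of_rpe_of P_ok) /active_slope.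
  case binds2: (binds_at P (zeta P eps2 Pi)).
    by rewrite (binds12 binds2) gap_slope_ZZ => ?; exfalso; lra.
  by case: binds_at; [right | left].
- move=> delta_lt0 Y1 Y2 /(Estable_BR_RPEP P_ok) [Py [gapy slopey -> ->]].
  move=> Z1 Z2 /(BR_RPEP P_ok) [Pz [gapz -> ->]].
  have slopez : active_slope P eps1 eps2 Pz < 0.
    exact: le_lt_trans (gap_slope_le_delta P_ok _ _) delta_lt0.
  by rewrite (root_eq Py gapy slopey) (root_eq Pz gapz slopez).
Qed.
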